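(* For the $b$-coupled spin-oscillator $F=(L,H)$, the only singular points (points where $dF$ has rank $<2$) are the two points $N=((0,0,1),(0,0))$ and $S=((0,0,-1),(0,0))$ of $S^2\times\mathbb R^2$. Both are fixed points ($dL=dH=0$), both are non-degenerate and of focus-focus type, and $dF$ has rank $2$ at every other point of $M$ (there are no singular points of rank $1$).
   Context: Fix constants $\rho_1,\rho_2>0$. Let $M=S^2\times\mathbb R^2$, where $S^2\subset\mathbb R^3$ is the unit sphere with coordinates $(x,y,z)$, $x^2+y^2+z^2=1$, and $(u,v)$ are coordinates on $\mathbb R^2$; let $Z=\{z=0\}\times\mathbb R^2$. On $\{|z|<1\}$ use cylindrical coordinates $(\theta,z)$ with $\theta=\arg(x+iy)$; on $\{z\neq0\}$ use $(x,y)$ as coordinates on each open hemisphere. The $b$-symplectic form is $\omega=-\rho_1\,\omega^b_{S^2}+\rho_2\,du\wedge dv$, where $\omega^b_{S^2}=d\theta\wedge\frac{dz}{z}$ on $\{|z|<1\}$ and $\omega^b_{S^2}=\frac{1}{1-x^2-y^2}dx\wedge dy$ on $\{z\ne0\}$. The $b$-coupled spin-oscillator is $F=(L,H)$ with $L=\rho_1\log|z|+\frac{\rho_2}{2}(u^2+v^2)$ and $H=\frac12(xu+yv)$; differentials are taken as $b$-forms. A fixed point $p$ (located away from $Z$) with $\Omega$ the matrix of $\omega$ at $p$ is non-degenerate if the operators $A_L=\Omega^{-1}d^2L(p)$, $A_H=\Omega^{-1}d^2H(p)$ span a Cartan subalgebra of $\mathfrak{sp}(4,\mathbb R)$ (in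 particular $d^2L(p),d^2H(p)$ are linearly independent and some combination $c_1A_L+c_2A_H$ has four distinct eigenvalues); it is of focus-focus type if such a combination has eigenvalues $\pm\alpha\pm i\beta$ with $\alpha,\beta\in\mathbb R\setminus\{0\}$, and of elliptic-elliptic type if they are $\pm i\alpha,\pm i\beta$ with $\alpha\ne\beta$ nonzero reals. *)

From Stdlib Require Import Reals.
From Coquelicot Require Import Coquelicot.
From mathcomp Require Import all_boot all_algebra.
From mathcomp Require Import Rstruct.

Set Implicit Arguments.
Unset Strict Implicit.
Unset Printing Implicit Defensive.

Import GRing.Theory.
Local Open Scope ring_scope.

Definition k0 : 'I_4 := @Ordinal 4 0 isT.
Definition k1 : 'I_4 := @Ordinal 4 1 isT.
Definition k2 : 'I_4 := @Ordinal 4 2 isT.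
Definition k3 : 'I_4 := @Ordinal 4 3 isT.

Definition mkq (a b c d : R) : 'I_4 -> R :=
  fun i => match val i with 0%N => a | 1%N => b | 2%N => c | _ => d end.

Definition upd (q : 'I_4 -> R) (i : 'I_4) (t : R) : 'I_4 -> R :=
  fun j => if j == i then t else q j.

Definition pd (f : ('I_4 -> R) -> R) (i : 'I_4) (q : 'I_4 -> R) : R :=
  Derive (fun t => f (upd q i t)) (q i).

Definition grad (f : ('I_4 -> R) -> R) (q : 'I_4 -> R) : 'rV[R]_4 :=
  \row_i pd f i q.

Definition hess (f : ('I_4 -> R) -> R) (q : 'I_4 -> R) : 'M[R]_4 :=
  \matrix_(i, j) pd (pd f j) i q.

Definition onM (x y z u v : R) : Prop := x ^+ 2 + y ^+ 2 + z ^+ 2 = 1.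

Definition Lsm (rho2 u v : R) : R := rho2 / 2 * (u ^+ 2 + v ^+ 2).
Definition L_M (rho1 rho2 x y z u v : R) : R :=
  rho1 * ln (Rabs z) + Lsm rho2 u v.
Definition H_M (x y z u v : R) : R := (x * u + y * v) / 2.

(* s = 1 : upper hemisphere, s = -1 : lower hemisphere *)
Definition zhem (s : R) (q : 'I_4 -> R) : R :=
  s * sqrt (1 - q k0 ^+ 2 - q k1 ^+ 2).
Definition L_hem (rho1 rho2 s : R) (q : 'I_4 -> R) : R :=
  L_M rho1 rho2 (q k0) (q k1) (zhem s q) (q k2) (q k3).
Definition H_hem (s : R) (q : 'I_4 -> R) : R :=
  H_M (q k0) (q k1) (zhem s q) (q k2) (q k3).

(* away from Z, b-forms are ordinary forms: dF in basis (dx,dy,du,dv) *)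
Definition dF_hem (rho1 rho2 s : R) (q : 'I_4 -> R) : 'M[R]_(1 + 1, 4) :=
  col_mx (grad (L_hem rho1 rho2 s) q) (grad (H_hem s) q).

(* matrix of omega = - rho1 dx/\dy/(1-x^2-y^2) + rho2 du/\dv at q,
   Omega i j = omega(e_i, e_j) in the basis (d/dx, d/dy, d/du, d/dv) *)
Definition Omega_hem (rho1 rho2 : R) (q : 'I_4 -> R) : 'M[R]_4 :=
  let a := - rho1 / (1 - q k0 ^+ 2 - q k1 ^+ 2) in
  \matrix_(i, j)
    if (i == k0) && (j == k1) then a
    else if (i == k1) && (j == k0) then - a
    else if (i == k2) && (j == k3) then rho2
    else if (i == k3) && (j == k2) then - rho2
    else 0.

Definition xcyl (q : 'I_4 -> R) : R := sqrt (1 - q k1 ^+ 2) * cos (q k0).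
Definition ycyl (q : 'I_4 -> R) : R := sqrt (1 - q k1 ^+ 2) * sin (q k0).
Definition Lsm_cyl (rho2 : R) (q : 'I_4 -> R) : R := Lsm rho2 (q k2) (q k3).
Definition H_cyl (q : 'I_4 -> R) : R :=
  H_M (xcyl q) (ycyl q) (q k1) (q k2) (q k3).

(* b-differential of a smooth g in the b-cotangent basis
   (dtheta, dz/z, du, dv): coefficients (g_theta, z g_z, g_u, g_v) *)
Definition bgrad (g : ('I_4 -> R) -> R) (q : 'I_4 -> R) : 'rV[R]_4 :=
  \row_i (if i == k1 then q k1 * pd g i q else pd g i q).

(* b-differential of the b-function L = rho1 log|z| + Lsm:
   dL = rho1 dz/z + d(Lsm) *)
Definition bdL_cyl (rho1 rho2 : R) (q : 'I_4 -> R) : 'rV[R]_4 :=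
  (\row_i (if i == k1 then rho1 else 0)) + bgrad (Lsm_cyl rho2) q.
Definition bdH_cyl (q : 'I_4 -> R) : 'rV[R]_4 := bgrad H_cyl q.

Definition dF_cyl (rho1 rho2 : R) (q : 'I_4 -> R) : 'M[R]_(1 + 1, 4) :=
  col_mx (bdL_cyl rho1 rho2 q) (bdH_cyl q).

Definition sgnz (z : R) : R := if 0 < z then 1 else -1.

Definition b_rank_dF (rho1 rho2 x y z u v : R) (r : nat) : Prop :=
  (z != 0 -> \rank (dF_hem rho1 rho2 (sgnz z) (mkq x y u v)) = r) /\
  (forall theta : R, -1 < z < 1 ->
     x = sqrt (1 - z ^+ 2) * cos theta -> y = sqrt (1 - z ^+ 2) * sin theta ->
     \rank (dF_cyl rho1 rho2 (mkq theta z u v)) = r).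

Definition singular_pt (rho1 rho2 x y z u v : R) : Prop :=
  exists r : nat, (r < 2)%N /\ b_rank_dF rho1 rho2 x y z u v r.

Definition fixed_pt (rho1 rho2 x y z u v : R) : Prop :=
  (z != 0 -> grad (L_hem rho1 rho2 (sgnz z)) (mkq x y u v) = 0 /\
             grad (H_hem (sgnz z)) (mkq x y u v) = 0) /\
  (forall theta : R, -1 < z < 1 ->
     x = sqrt (1 - z ^+ 2) * cos theta -> y = sqrt (1 - z ^+ 2) * sin theta ->
     bdL_cyl rho1 rho2 (mkq theta z u v) = 0 /\ bdH_cyl (mkq theta z u v) = 0).

Definition in_sp (Om X : 'M[R]_4) : Prop := X^T *m Om + Om *m X = 0.
Definition lie (X Y : 'M[R]_4) : 'M[R]_4 := X *m Y - Y *m X.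
Definition in_span2 (A B X : 'M[R]_4) : Prop :=
  exists c1 c2 : R, X = c1 *: A + c2 *: B.
Definition iter_lie (Xs : seq 'M[R]_4) (Y : 'M[R]_4) : 'M[R]_4 :=
  foldr lie Y Xs.

(* span{A,B} is a Cartan subalgebra of sp(Omega): a Lie subalgebra which is
   nilpotent and self-normalizing in sp(Omega) *)
Definition cartan_span (Om A B : 'M[R]_4) : Prop :=
  in_sp Om A /\ in_sp Om B /\
  (forall X Y, in_span2 A B X -> in_span2 A B Y -> in_span2 A B (lie X Y)) /\
  (exists n : nat, forall (Xs : seq 'M[R]_4) (Y : 'M[R]_4),
      size Xs = n -> (forall X, X \in Xs -> in_span2 A B X) -> in_span2 A B Y ->
      iter_lie Xs Y = 0) /\
  (forall X, in_sp Om X ->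
     (forall Y, in_span2 A B Y -> in_span2 A B (lie X Y)) -> in_span2 A B X).

Definition nondeg_focus_focus (rho1 rho2 x y z u v : R) : Prop :=
  z != 0 /\
  let q := mkq x y u v in
  let Om := Omega_hem rho1 rho2 q in
  let AL := invmx Om *m hess (L_hem rho1 rho2 (sgnz z)) q in
  let AH := invmx Om *m hess (H_hem (sgnz z)) q in
  cartan_span Om AL AH /\
  exists c1 c2 alpha beta : R, alpha != 0 /\ beta != 0 /\
    (* eigenvalues of c1 AL + c2 AH are  +-alpha +- i beta *)
    char_poly (c1 *: AL + c2 *: AH) =
      (('X - alpha%:P) ^+ 2 + (beta ^+ 2)%:P) *
      (('X + alpha%:P) ^+ 2 + (beta ^+ 2)%:P).

(* A two-row matrix has rank 2 when its rows are
     independent; independence of (dL, dH) reduces to elementary real algebra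
     ([hem_rows_indep], [cyl_rows_indep]), which fails only at the poles.
   - Cartan subalgebras.  If A, B commute, lie in sp(Omega), have a
     non-degenerate trace form and their common centralizer in sp(Omega) is
     span{A, B}, then span{A, B} is a Cartan subalgebra
     ([cartan_of_commuting]): the trace form forces every normalizing element
     to centralize A and B.
   - At the poles Omega^-1 d^2L, Omega^-1 d^2H are explicit 4x4 matrices
     satisfying these hypotheses, and AL + 2 rho1 AH has eigenvalues
     +-sqrt(rho1/rho2) +- i, so the poles are focus-focus points. *)
From Stdlib Require Import Reals Lra FunctionalExtensionality.
From Coquelicot Require Import Coquelicot.
From mathcomp Require Import all_boot all_order all_algebra.
From mathcomp Require Import Rstruct.

Open Scope R_scope.

Lemma ord4_cases (i : 'I_4) : i = k0 \/ i = k1 \/ i = k2 \/ i = k3.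
Proof.
case: i => -[|[|[|[|j]]]] Hj //.
- by left; apply: val_inj.
- by right; left; apply: val_inj.
- by right; right; left; apply: val_inj.
- by right; right; right; apply: val_inj.
Qed.

Lemma mkq0 a b c d : mkq a b c d k0 = a. Proof. by []. Qed.
Lemma mkq1 a b c d : mkq a b c d k1 = b. Proof. by []. Qed.
Lemma mkq2 a b c d : mkq a b c d k2 = c. Proof. by []. Qed.
Lemma mkq3 a b c d : mkq a b c d k3 = d. Proof. by []. Qed.
Definition mkqE := (mkq0, mkq1, mkq2, mkq3).

Lemma pd_mkq0 f a b c d : pd f k0 (mkq a b c d) = Derive (fun t => f (mkq t b c d)) a.
Proof.
rewrite /pd mkq0; congr Derive; apply: functional_extensionality => t.
by congr f; apply: functional_extensionality => -[[|[|[|[|j]]]] Hj].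
Qed.

Lemma pd_mkq1 f a b c d : pd f k1 (mkq a b c d) = Derive (fun t => f (mkq a t c d)) b.
Proof.
rewrite /pd mkq1; congr Derive; apply: functional_extensionality => t.
by congr f; apply: functional_extensionality => -[[|[|[|[|j]]]] Hj].
Qed.

Lemma pd_mkq2 f a b c d : pd f k2 (mkq a b c d) = Derive (fun t => f (mkq a b t d)) c.
Proof.
rewrite /pd mkq2; congr Derive; apply: functional_extensionality => t.
by congr f; apply: functional_extensionality => -[[|[|[|[|j]]]] Hj].
Qed.

Lemma pd_mkq3 f a b c d : pd f k3 (mkq a b c d) = Derive (fun t => f (mkq a b c t)) d.
Proof.
rewrite /pd mkq3; congr Derive; apply: functional_extensionality => t.
by congr f; apply: functional_extensionality => -[[|[|[|[|j]]]] Hj].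
Qed.

Lemma locally_pos (g : R -> R) x : continuous g x -> 0 < g x ->
  locally x (fun t => 0 < g t).
Proof.
move=> /continuity_pt_filterlim /continuity_pt_locally Hg Hx.
apply: filter_imp (Hg (mkposreal _ Hx)) => t /= /Rabs_def2; lra.
Qed.

Lemma locally_disk a b : 0 < 1 - a^2 - b^2 -> locally a (fun t => 0 < 1 - t^2 - b^2).
Proof.
move=> Hw; apply: (locally_pos (fun t => 1 - t^2 - b^2)) => //.
by apply: ex_derive_continuous; auto_derive.
Qed.

(* Hemisphere charts.  Since |z| = sqrt (1 - x^2 - y^2), the b-function L is
   the smooth function rho1/2 ln(1 - x^2 - y^2) + Lsm there. *)
Lemma L_hem_mkq r1 r2 s a b c d : L_hem r1 r2 s (mkq a b c d) =
  r1 * ln (Rabs (s * sqrt (1 - a^2 - b^2))) + r2 / 2 * (c^2 + d^2).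
Proof. by rewrite /L_hem /L_M /Lsm /zhem !mkqE !RealsE. Qed.

Lemma L_hem_log r1 r2 s a b c d : s = 1 \/ s = -1 -> 0 < 1 - a^2 - b^2 ->
  L_hem r1 r2 s (mkq a b c d) = r1 / 2 * ln (1 - a^2 - b^2) + r2 / 2 * (c^2 + d^2).
Proof.
move=> Hs Hw; rewrite L_hem_mkq Rabs_mult (Rabs_pos_eq (sqrt _)); last exact: sqrt_pos.
have -> : Rabs s = 1 by case: Hs => ->; rewrite ?Rabs_Ropp Rabs_R1.
rewrite Rmult_1_l -Rpower_sqrt // ln_Rpower; field.
Qed.

Lemma H_hem_mkq s a b c d : H_hem s (mkq a b c d) = (a * c + b * d) / 2.
Proof. by rewrite /H_hem /H_M !mkqE !RealsE. Qed.

Definition dL_hem (r1 r2 : R) (q : 'I_4 -> R) : 'I_4 -> R :=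
  let w := 1 - q k0 ^ 2 - q k1 ^ 2 in
  mkq (- (r1 / w) * q k0) (- (r1 / w) * q k1) (r2 * q k2) (r2 * q k3).

Definition dH_hem (q : 'I_4 -> R) : 'I_4 -> R :=
  mkq (q k2 / 2) (q k3 / 2) (q k0 / 2) (q k1 / 2).

Lemma pd_L_hem r1 r2 s j a b c d : s = 1 \/ s = -1 -> 0 < 1 - a^2 - b^2 ->
  pd (L_hem r1 r2 s) j (mkq a b c d) = dL_hem r1 r2 (mkq a b c d) j.
Proof.
move=> Hs Hw; rewrite /dL_hem !mkqE.
have Hw' : 0 < 1 - b^2 - a^2 by lra.
case: (ord4_cases j) => [->|[->|[->|->]]];
  rewrite ?pd_mkq0 ?pd_mkq1 ?pd_mkq2 ?pd_mkq3 !mkqE; apply: is_derive_unique.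
- apply: (is_derive_ext_loc (fun t => r1 / 2 * ln (1 - t^2 - b^2) + r2 / 2 * (c^2 + d^2))).
    by apply: filter_imp (locally_disk _ _ Hw) => t Ht; rewrite L_hem_log.
  auto_derive; first lra. field; lra.
- apply: (is_derive_ext_loc (fun t => r1 / 2 * ln (1 - t^2 - a^2) + r2 / 2 * (c^2 + d^2))).
    apply: filter_imp (locally_disk _ _ Hw') => t Ht; rewrite L_hem_log; [|done|lra].
    by rewrite (_ : 1 - a^2 - t^2 = 1 - t^2 - a^2) //; ring.
  auto_derive; first lra. field; lra.
- apply: (is_derive_ext (fun t => r1 / 2 * ln (1 - a^2 - b^2) + r2 / 2 * (t^2 + d^2))).
    by move=> t; rewrite L_hem_log.
  auto_derive => //; field.
- apply: (is_derive_ext (fun t => r1 / 2 * ln (1 - a^2 - b^2) + r2 / 2 * (c^2 + t^2))).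
    by move=> t; rewrite L_hem_log.
  auto_derive => //; field.
Qed.

Lemma pd_H_hem s j a b c d :
  pd (H_hem s) j (mkq a b c d) = dH_hem (mkq a b c d) j.
Proof.
rewrite /dH_hem !mkqE.
case: (ord4_cases j) => [->|[->|[->|->]]];
  rewrite ?pd_mkq0 ?pd_mkq1 ?pd_mkq2 ?pd_mkq3 !mkqE; apply: is_derive_unique;
  (apply: is_derive_ext; first by move=> t; rewrite H_hem_mkq);
  auto_derive => //; field.
Qed.

Definition M4 (T : Type) (e : nat -> nat -> T) : 'M[T]_4 := \matrix_(i, j) e i j.
Arguments M4 {T} e.

Definition origin : 'I_4 -> R := mkq 0 0 0 0.

Lemma pd_origin_ext f g i :
  (forall a b c d, 0 < 1 - a^2 - b^2 -> f (mkq a b c d) = g (mkq a b c d)) ->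
  pd f i origin = pd g i origin.
Proof.
move=> Hfg; have Hw : 0 < 1 - 0^2 - 0^2 by lra.
rewrite /origin; case: (ord4_cases i) => [->|[->|[->|->]]];
  rewrite ?pd_mkq0 ?pd_mkq1 ?pd_mkq2 ?pd_mkq3; apply: Derive_ext_loc.
- by apply: filter_imp (locally_disk _ _ Hw) => t; apply: Hfg.
- apply: filter_imp (locally_disk _ _ Hw) => t Ht; apply: Hfg; lra.
- by apply: filter_forall => t; apply: Hfg.
- by apply: filter_forall => t; apply: Hfg.
Qed.

Definition hessL_origin (r1 r2 : R) : 'M[R]_4 := M4 (fun i j =>
  match i, j with
  | 0%N, 0%N | 1%N, 1%N => - r1 | 2%N, 2%N | 3%N, 3%N => r2 | _, _ => 0 end).

Definition hessH_origin : 'M[R]_4 := M4 (fun i j =>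
  match i, j with
  | 0%N, 2%N | 2%N, 0%N | 1%N, 3%N | 3%N, 1%N => / 2 | _, _ => 0 end).

Lemma hess_L_hem r1 r2 s : s = 1 \/ s = -1 ->
  hess (L_hem r1 r2 s) origin = hessL_origin r1 r2.
Proof.
move=> Hs; apply/matrixP => i j; rewrite !mxE.
rewrite (pd_origin_ext _ (fun q => dL_hem r1 r2 q j)); last first.
  by move=> a b c d Hw; rewrite pd_L_hem.
rewrite /origin /dL_hem.
case: (ord4_cases i) => [->|[->|[->|->]]]; case: (ord4_cases j) => [->|[->|[->|->]]];
  rewrite ?pd_mkq0 ?pd_mkq1 ?pd_mkq2 ?pd_mkq3 /mkq /=; apply: is_derive_unique;
  auto_derive; try field; lra.
Qed.

Lemma hess_H_hem s : hess (H_hem s) origin = hessH_origin.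
Proof.
apply/matrixP => i j; rewrite !mxE.
rewrite (pd_origin_ext _ (fun q => dH_hem q j)); last first.
  by move=> a b c d Hw; rewrite pd_H_hem.
rewrite /origin /dH_hem.
case: (ord4_cases i) => [->|[->|[->|->]]]; case: (ord4_cases j) => [->|[->|[->|->]]];
  rewrite ?pd_mkq0 ?pd_mkq1 ?pd_mkq2 ?pd_mkq3 /mkq /=; apply: is_derive_unique;
  auto_derive => //; field.
Qed.

Lemma Lsm_cyl_mkq r2 a b c d : Lsm_cyl r2 (mkq a b c d) = r2 / 2 * (c^2 + d^2).
Proof. by rewrite /Lsm_cyl /Lsm !mkqE !RealsE. Qed.

Lemma H_cyl_mkq a b c d : H_cyl (mkq a b c d) =
  (sqrt (1 - b^2) * cos a * c + sqrt (1 - b^2) * sin a * d) / 2.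
Proof. by rewrite /H_cyl /H_M /xcyl /ycyl !mkqE !RealsE. Qed.

Definition dLsm_cyl (r2 : R) (q : 'I_4 -> R) : 'I_4 -> R :=
  mkq 0 0 (r2 * q k2) (r2 * q k3).

Definition dH_cyl (q : 'I_4 -> R) : 'I_4 -> R :=
  let T := sqrt (1 - q k1 ^ 2) in
  let th := q k0 in
  mkq (T * (- sin th * q k2 + cos th * q k3) / 2)
      (- q k1 / T * (cos th * q k2 + sin th * q k3) / 2)
      (T * cos th / 2) (T * sin th / 2).

Lemma pd_Lsm_cyl r2 j a b c d :
  pd (Lsm_cyl r2) j (mkq a b c d) = dLsm_cyl r2 (mkq a b c d) j.
Proof.
rewrite /dLsm_cyl !mkqE.
case: (ord4_cases j) => [->|[->|[->|->]]];
  rewrite ?pd_mkq0 ?pd_mkq1 ?pd_mkq2 ?pd_mkq3 !mkqE; apply: is_derive_unique;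
  (apply: is_derive_ext; first by move=> t; rewrite Lsm_cyl_mkq);
  auto_derive => //; field.
Qed.

Lemma pd_H_cyl j a b c d : -1 < b < 1 ->
  pd H_cyl j (mkq a b c d) = dH_cyl (mkq a b c d) j.
Proof.
move=> Hb; have Hw : 0 < 1 - b^2 by nra.
have HT := sqrt_lt_R0 _ Hw.
have E1 : 1 + - (b * b) = 1 - b^2 by ring.
have E2 : 1 - b * b = 1 - b^2 by ring.
rewrite /dH_cyl !mkqE.
case: (ord4_cases j) => [->|[->|[->|->]]];
  rewrite ?pd_mkq0 ?pd_mkq1 ?pd_mkq2 ?pd_mkq3 !mkqE; apply: is_derive_unique;
  (apply: is_derive_ext; first by move=> t; rewrite H_cyl_mkq);
  auto_derive; rewrite ?Rmult_1_r ?E1 ?E2; try (repeat split; lra); field; lra.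
Qed.

(* Points of the equator have an angle, so the cylindrical chart covers them. *)
Lemma angle_of_unit_circle x y : x^2 + y^2 = 1 ->
  exists th, x = cos th /\ y = sin th.
Proof.
move=> H.
have Hx : -1 <= x <= 1 by split; nra.
have Hs : sqrt (1 - x²) = Rabs y.
  by rewrite -sqrt_Rsqr_abs /Rsqr; f_equal; nra.
case: (Rle_or_lt 0 y) => Hy.
- by exists (acos x); rewrite cos_acos // sin_acos // Hs Rabs_pos_eq.
- exists (- acos x); rewrite cos_neg sin_neg cos_acos // sin_acos // Hs Rabs_left //.
  by split => //; ring.
Qed.

Close Scope R_scope.

From mathcomp Require Import ring lra.
Import Order.TTheory GRing.Theory Num.Theory.
Local Open Scope ring_scope.
Set Implicit Arguments.
Unset Strict Implicit.

Definition toring := (RplusE, RminusE, RmultE, RoppE, RinvE, RdivE, RpowE,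
  R0E, R1E, IZRposE, INRE).

Lemma pos_comb_sq_eq0 (k m x u : R) : 0 < k -> 0 < m ->
  k * x ^+ 2 + m * u ^+ 2 = 0 -> x = 0 /\ u = 0.
Proof.
move=> Hk Hm /eqP.
have Hkx : 0 <= k * x ^+ 2 := mulr_ge0 (ltW Hk) (sqr_ge0 x).
have Hmu : 0 <= m * u ^+ 2 := mulr_ge0 (ltW Hm) (sqr_ge0 u).
rewrite paddr_eq0 // mulf_eq0 [m * _ == 0]mulf_eq0 !sqrf_eq0.
rewrite (negbTE (lt0r_neq0 Hk)) (negbTE (lt0r_neq0 Hm)) /=.
by case/andP => /eqP -> /eqP ->; split.
Qed.

Lemma hem_rows_indep (k m x y u v c d : R) : 0 < k -> 0 < m ->
  ~ (x = 0 /\ y = 0 /\ u = 0 /\ v = 0) ->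
  c * (- k * x) + d * (u / 2) = 0 -> c * (- k * y) + d * (v / 2) = 0 ->
  c * (m * u) + d * (x / 2) = 0 -> c * (m * v) + d * (y / 2) = 0 ->
  c = 0 /\ d = 0.
Proof.
move=> Hk Hm Hnz e0 e1 e2 e3.
have Exu : c * (k * x ^+ 2 + m * u ^+ 2) = 0.
  rewrite (_ : c * _ = u * (c * (m * u) + d * (x / 2)) - x * (c * (- k * x) + d * (u / 2))).
    by rewrite e0 e2 !mulr0 subr0.
  by field.
have Eyv : c * (k * y ^+ 2 + m * v ^+ 2) = 0.
  rewrite (_ : c * _ = v * (c * (m * v) + d * (y / 2)) - y * (c * (- k * y) + d * (v / 2))).
    by rewrite e1 e3 !mulr0 subr0.
  by field.
have [Hc|Hc] := eqVneq c 0; last first.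
  exfalso; apply: Hnz.
  have [|-> ->] := @pos_comb_sq_eq0 k m x u Hk Hm; first by apply: (mulfI Hc); rewrite mulr0.
  have [|-> ->] := @pos_comb_sq_eq0 k m y v Hk Hm; first by apply: (mulfI Hc); rewrite mulr0.
  by do !split.
split=> //; apply/eqP; apply: contraT => Hd; exfalso; apply: Hnz.
have half0 w : d * (w / 2) = 0 -> w = 0.
  by move/eqP; rewrite mulf_eq0 (negbTE Hd) mulf_eq0 invr_eq0 pnatr_eq0 orbF => /eqP.
move: e0 e1 e2 e3; rewrite Hc !mul0r !add0r.
by move=> /half0 -> /half0 -> /half0 -> /half0 ->.
Qed.

(* In the cylindrical chart the dz/z-component r1 of dL, together with the
   (u, v)-components, already forces independence, for every z in (-1, 1). *)
Lemma cyl_rows_indep (r1 r2 z T co si u v c d : R) : 0 < r1 -> 0 < r2 -> 0 < T ->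
  co ^+ 2 + si ^+ 2 = 1 ->
  c * r1 + d * (z * (- z / T * (co * u + si * v) / 2)) = 0 ->
  c * (r2 * u) + d * (T * co / 2) = 0 -> c * (r2 * v) + d * (T * si / 2) = 0 ->
  c = 0 /\ d = 0.
Proof.
move=> H1 H2 HT Hcs e1 e2 e3.
have HT0 : T != 0 := lt0r_neq0 HT.
set p := co * u + si * v.
have Ep : c * r2 * p + d * T / 2 = 0.
  rewrite (_ : c * r2 * p + _ = co * (c * (r2 * u) + d * (T * co / 2))
                                + si * (c * (r2 * v) + d * (T * si / 2))
                                - d * T / 2 * (co ^+ 2 + si ^+ 2 - 1)); last by rewrite /p; field.
  by rewrite e2 e3 Hcs subrr !mulr0 addr0 subr0.
have Ez : c * r1 * T - d * z ^+ 2 * p / 2 = 0.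
  rewrite (_ : c * r1 * T - _ = T * (c * r1 + d * (z * (- z / T * p / 2)))); last by field.
  by rewrite e1 mulr0.
have Hsq : (r1 * r2) * c ^+ 2 + 4^-1 * (d * z) ^+ 2 = 0.
  apply: (mulfI HT0); rewrite mulr0.
  rewrite (_ : T * _ = c * r2 * (c * r1 * T - d * z ^+ 2 * p / 2)
                       + d * z ^+ 2 / 2 * (c * r2 * p + d * T / 2)); last by field.
  by rewrite Ez Ep !mulr0 addr0.
have [|Hc _] := @pos_comb_sq_eq0 (r1 * r2) 4^-1 c (d * z) (mulr_gt0 H1 H2) _ Hsq.
  by rewrite invr_gt0.
split=> //; apply/eqP; apply: contraT => Hd; exfalso.
have trig0 w : d * (T * w / 2) = 0 -> w = 0.
  move/eqP; rewrite mulf_eq0 (negbTE Hd) !mulf_eq0 (negbTE HT0) invr_eq0 pnatr_eq0 /=.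
  by rewrite orbF => /eqP.
move: e2 e3 Hcs; rewrite Hc !mul0r !add0r => /trig0 -> /trig0 ->.
by rewrite expr0n add0r => /eqP; rewrite eq_sym oner_eq0.
Qed.

Lemma rank_two_rows (a b : 'rV[R]_4) :
  (forall c d : R, (forall j, c * a 0 j + d * b 0 j = 0) -> c = 0 /\ d = 0) ->
  \rank (col_mx a b) = 2%N.
Proof.
move=> indep; apply/eqP; change (row_free (col_mx a b)); apply: inj_row_free => w Hw.
rewrite -[w]hsubmxK in Hw *; rewrite mul_row_col in Hw.
rewrite (mx11_scalar (lsubmx w)) (mx11_scalar (rsubmx w)) !mul_scalar_mx in Hw *.
have [-> ->] : lsubmx w 0 0 = 0 /\ rsubmx w 0 0 = 0.
  apply: indep => j; have := congr1 (fun M : 'rV_4 => M 0 j) Hw; by rewrite !mxE.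
by apply/matrixP => i j; rewrite !mxE; case: splitP => k _; rewrite !mxE mul0rn.
Qed.

Lemma rank_dF_hem r1 r2 s x y u v : 0 < r1 -> 0 < r2 -> s = 1 \/ s = -1 ->
  0 < 1 - x ^+ 2 - y ^+ 2 -> ~ (x = 0 /\ y = 0 /\ u = 0 /\ v = 0) ->
  \rank (dF_hem r1 r2 s (mkq x y u v)) = 2%N.
Proof.
move=> H1 H2 Hs Hw Hnz; apply: rank_two_rows => c d Hcd.
have ej j : c * dL_hem r1 r2 (mkq x y u v) j + d * dH_hem (mkq x y u v) j = 0.
  move: (Hcd j); rewrite !mxE pd_H_hem pd_L_hem //.
  by apply/RltP; rewrite !toring.
move: (ej k0) (ej k1) (ej k2) (ej k3); rewrite /dL_hem /dH_hem !mkqE !toring.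
by apply: hem_rows_indep => //; rewrite divr_gt0.
Qed.

Lemma rank_dF_cyl r1 r2 th z u v : 0 < r1 -> 0 < r2 -> -1 < z < 1 ->
  \rank (dF_cyl r1 r2 (mkq th z u v)) = 2%N.
Proof.
move=> H1 H2 Hz; apply: rank_two_rows => c d Hcd.
have HT : 0 < sqrt (1 - z ^+ 2).
  by apply/RltP/sqrt_lt_R0/RltP; case/andP: Hz => ? ?; rewrite ?toring; nra.
have Hcs : cos th ^+ 2 + sin th ^+ 2 = 1.
  by have := sin2_cos2 th; rewrite /Rsqr !toring -!expr2 addrC.
have HzR : Rlt (IZR (-1)) z /\ Rlt z (IZR 1) by case/andP: Hz => /RltP ? /RltP ?.
move: (Hcd k1) (Hcd k2) (Hcd k3).
rewrite /bdL_cyl /bdH_cyl /bgrad !mxE /= !pd_Lsm_cyl !pd_H_cyl //.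
rewrite /dLsm_cyl /dH_cyl !mkqE !toring /= mulr0 addr0 !add0r.
exact: cyl_rows_indep.
Qed.

Lemma lie_linl a b (X Y Z : 'M[R]_4) :
  lie (a *: X + b *: Y) Z = a *: lie X Z + b *: lie Y Z.
Proof.
by rewrite /lie mulmxDl mulmxDr -!scalemxAl -!scalemxAr !scalerBr opprD addrACA.
Qed.

Lemma lie_linr a b (X Y Z : 'M[R]_4) :
  lie Z (a *: X + b *: Y) = a *: lie Z X + b *: lie Z Y.
Proof.
by rewrite /lie mulmxDl mulmxDr -!scalemxAl -!scalemxAr !scalerBr opprD addrACA.
Qed.

Lemma lie_scaler (k : R) (X Y : 'M[R]_4) : lie X (k *: Y) = k *: lie X Y.
Proof. by rewrite /lie -scalemxAl -scalemxAr scalerBr. Qed.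

Lemma lie_anti (X Y : 'M[R]_4) : lie Y X = - lie X Y.
Proof. by rewrite /lie opprB. Qed.

Lemma lie_self (X : 'M[R]_4) : lie X X = 0.
Proof. exact: subrr. Qed.

Lemma lie_span_commuting (A B X Y : 'M[R]_4) : lie A B = 0 ->
  in_span2 A B X -> in_span2 A B Y -> lie X Y = 0.
Proof.
move=> AB [c1 [c2 ->]] [d1 [d2 ->]].
rewrite lie_linl !lie_linr (lie_anti A B) AB !lie_self oppr0.
by rewrite !(scaler0, addr0).
Qed.

Lemma trace_lie (X Y Z : 'M[R]_4) : \tr (lie X Y *m Z) = \tr (X *m lie Y Z).
Proof.
rewrite /lie mulmxBl mulmxBr !raddfB /= -!mulmxA.
by rewrite [\tr (Y *m _)]mxtrace_mulC -mulmxA.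
Qed.

Definition trace_gram (A B : 'M[R]_4) : R :=
  (\tr (A *m A) * \tr (B *m B) - \tr (A *m B) ^+ 2)%R.

(* If Y commutes with A and B and the trace form is non-degenerate on
   span{A, B}, then [X, Y] in span{A, B} forces [X, Y] = 0: by invariance
   [X, Y] is trace-orthogonal to A and B. *)
Lemma normalizer_lie_zero (A B X Y : 'M[R]_4) :
  lie Y A = 0 -> lie Y B = 0 -> trace_gram A B != 0 ->
  in_span2 A B (lie X Y) -> lie X Y = 0.
Proof.
move=> YA YB Hg [c1 [c2 E]].
have tr_comb (C : 'M[R]_4) :
    \tr ((c1 *: A + c2 *: B) *m C) = c1 * \tr (A *m C) + c2 * \tr (B *m C).
  by rewrite mulmxDl -!scalemxAl mxtraceD !mxtraceZ.
have eA : c1 * \tr (A *m A) + c2 * \tr (A *m B) = 0.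
  by rewrite [\tr (A *m B)]mxtrace_mulC -tr_comb -E trace_lie YA mulmx0 mxtrace0.
have eB : c1 * \tr (A *m B) + c2 * \tr (B *m B) = 0.
  by rewrite -tr_comb -E trace_lie YB mulmx0 mxtrace0.
have gram_eq0 c : c * trace_gram A B = 0 -> c = 0.
  by move/eqP; rewrite mulf_eq0 (negbTE Hg) orbF => /eqP.
have c1_0 : c1 = 0.
  apply: gram_eq0; rewrite (_ : _ * _ = \tr (B *m B) * (c1 * \tr (A *m A) + c2 * \tr (A *m B))
                                     - \tr (A *m B) * (c1 * \tr (A *m B) + c2 * \tr (B *m B))).
    by rewrite eA eB !mulr0 subr0.
  by rewrite /trace_gram; ring.
have c2_0 : c2 = 0.
  apply: gram_eq0; rewrite (_ : _ * _ = \tr (A *m A) * (c1 * \tr (A *m B) + c2 * \tr (B *m B))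
                                     - \tr (A *m B) * (c1 * \tr (A *m A) + c2 * \tr (A *m B))).
    by rewrite eA eB !mulr0 subr0.
  by rewrite /trace_gram; ring.
by rewrite E c1_0 c2_0 !scale0r addr0.
Qed.

Lemma cartan_of_commuting (Om A B : 'M[R]_4) :
  in_sp Om A -> in_sp Om B -> lie A B = 0 -> trace_gram A B != 0 ->
  (forall X, in_sp Om X -> lie X A = 0 -> lie X B = 0 -> in_span2 A B X) ->
  cartan_span Om A B.
Proof.
move=> spA spB AB Hg centr.
have spanA : in_span2 A B A by exists 1, 0; rewrite scale1r scale0r addr0.
have spanB : in_span2 A B B by exists 0, 1; rewrite scale1r scale0r add0r.
have span0 : in_span2 A B 0 by exists 0, 0; rewrite !scale0r addr0.
have BA : lie B A = 0 by rewrite lie_anti AB oppr0.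
split=> //; split=> //; split.
  by move=> X Y HX HY; rewrite (lie_span_commuting AB HX HY).
split.
  exists 1%N => -[|X [|? ?]] //= Y _ HX HY.
  by rewrite (lie_span_commuting AB (HX X (mem_head _ _)) HY).
move=> X spX normX; apply: centr => //.
- by apply: normalizer_lie_zero (lie_self A) AB Hg (normX A spanA).
- by apply: normalizer_lie_zero BA (lie_self B) Hg (normX B spanB).
Qed.

Lemma M4_eqP (e f : nat -> nat -> R) :
  M4 e = M4 f <-> forall i j, (i < 4)%N -> (j < 4)%N -> e i j = f i j.
Proof.
split=> [Hef i j Hi Hj | Hef]; last by apply/matrixP => i j; rewrite !mxE Hef.
by have := congr1 (fun A : 'M_4 => A (inord i) (inord j)) Hef; rewrite !mxE !inordK.
Qed.

Lemma M4_eta (A : 'M[R]_4) : A = M4 (fun i j => A (inord i) (inord j)).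
Proof. by apply/matrixP => i j; rewrite mxE !inord_val. Qed.

Lemma mulM4 (e f : nat -> nat -> R) : M4 e *m M4 f = M4 (fun i j =>
  e i 0%N * f 0%N j + e i 1%N * f 1%N j + e i 2%N * f 2%N j + e i 3%N * f 3%N j)%R.
Proof.
by apply/matrixP => i j; rewrite !mxE !big_ord_recl big_ord0 !mxE addr0 !addrA.
Qed.

Lemma addM4 (e f : nat -> nat -> R) : M4 e + M4 f = M4 (fun i j => e i j + f i j)%R.
Proof. by apply/matrixP => i j; rewrite !mxE. Qed.

Lemma subM4 (e f : nat -> nat -> R) : M4 e - M4 f = M4 (fun i j => e i j - f i j)%R.
Proof. by apply/matrixP => i j; rewrite !mxE. Qed.

Lemma scaleM4 (c : R) (e : nat -> nat -> R) : c *: M4 e = M4 (fun i j => c * e i j)%R.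
Proof. by apply/matrixP => i j; rewrite !mxE. Qed.

Lemma trM4 (e : nat -> nat -> R) : (M4 e)^T = M4 (fun i j => e j i).
Proof. by apply/matrixP => i j; rewrite !mxE. Qed.

Lemma zeroM4 : (0 : 'M[R]_4) = M4 (fun _ _ => 0%R).
Proof. by apply/matrixP => i j; rewrite !mxE. Qed.

Lemma mxtraceM4 (e : nat -> nat -> R) :
  \tr (M4 e) = (e 0%N 0%N + e 1%N 1%N + e 2%N 2%N + e 3%N 3%N)%R.
Proof. by rewrite /mxtrace !big_ord_recl big_ord0 !mxE addr0 !addrA. Qed.

Definition M4E := (mulM4, addM4, subM4, scaleM4, trM4).

Ltac M4_entrywise :=
  apply/M4_eqP => -[|[|[|[|?]]]] -[|[|[|[|?]]]] ? ? //=; rewrite ?toring /=.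

Lemma det4 (T : comNzRingType) (f : nat -> nat -> T) :
  \det (M4 f) =
  f 0 0 * f 1 1 * f 2 2 * f 3 3 - f 0 0 * f 1 1 * f 2 3 * f 3 2 - f 0 0 * f 1 2 * f 2 1 * f 3 3 + f 0 0 * f 1 2 * f 2 3 * f 3 1 + f 0 0 * f 1 3 * f 2 1 * f 3 2 - f 0 0 * f 1 3 * f 2 2 * f 3 1 - f 0 1 * f 1 0 * f 2 2 * f 3 3 + f 0 1 * f 1 0 * f 2 3 * f 3 2 + f 0 1 * f 1 2 * f 2 0 * f 3 3 - f 0 1 * f 1 2 * f 2 3 * f 3 0 - f 0 1 * f 1 3 * f 2 0 * f 3 2 + f 0 1 * f 1 3 * f 2 2 * f 3 0 + f 0 2 * f 1 0 * f 2 1 * f 3 3 - f 0 2 * f 1 0 * f 2 3 * f 3 1 - f 0 2 * f 1 1 * f 2 0 * f 3 3 + f 0 2 * f 1 1 * f 2 3 * f 3 0 + f 0 2 * f 1 3 * f 2 0 * f 3 1 - f 0 2 * f 1 3 * f 2 1 * f 3 0 - f 0 3 * f 1 0 * f 2 1 * f 3 2 + f 0 3 * f 1 0 * f 2 2 * f 3 1 + f 0 3 * f 1 1 * f 2 0 * f 3 2 - f 0 3 * f 1 1 * f 2 2 * f 3 0 - f 0 3 * f 1 2 * f 2 0 * f 3 1 + f 0 3 * f 1 2 * f 2 1 * f 3 0.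
Proof.
rewrite (expand_det_row _ ord0) !big_ord_recl big_ord0 /cofactor.
rewrite !(expand_det_row _ ord0) !big_ord_recl !big_ord0 /cofactor.
rewrite !(expand_det_row _ ord0) !big_ord_recl !big_ord0 /cofactor.
by rewrite !det_mx11 !mxE /=; ring.
Qed.

Lemma char_poly_mxM4 (e : nat -> nat -> R) :
  char_poly_mx (M4 e) = M4 (fun i j => 'X *+ (i == j) - (e i j)%:P).
Proof. by apply/matrixP => i j; rewrite !mxE. Qed.

(* Omega^-1 H is computed by solving Omega A = H. *)
Lemma invmx_solve (A X B : 'M[R]_4) : A \in unitmx -> A *m X = B -> invmx A *m B = X.
Proof. by move=> HA <-; rewrite mulKmx. Qed.

Section Pole.
Variables r1 r2 : R.
Hypotheses (Hr1 : 0 < r1) (Hr2 : 0 < r2).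
Let r1n0 : r1 != 0 := lt0r_neq0 Hr1.
Let r2n0 : r2 != 0 := lt0r_neq0 Hr2.

Definition Om0 : 'M[R]_4 := M4 (fun i j => match i, j with
  | 0%N, 1%N => - r1 | 1%N, 0%N => r1 | 2%N, 3%N => r2 | 3%N, 2%N => - r2 | _, _ => 0 end).

Definition AL0 : 'M[R]_4 := M4 (fun i j => match i, j with
  | 0%N, 1%N => -1 | 1%N, 0%N => 1 | 2%N, 3%N => -1 | 3%N, 2%N => 1 | _, _ => 0 end).

Definition PH0 : 'M[R]_4 := M4 (fun i j => match i, j with
  | 0%N, 3%N => r2 | 1%N, 2%N => - r2 | 2%N, 1%N => - r1 | 3%N, 0%N => r1 | _, _ => 0 end).

Definition AH0 : 'M[R]_4 := (2 * r1 * r2)^-1 *: PH0.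

Lemma Omega_origin : Omega_hem r1 r2 origin = Om0.
Proof.
have w1 : 1 - origin k0 ^+ 2 - origin k1 ^+ 2 = 1 by rewrite /origin !mkqE R0E expr0n !subr0.
apply/matrixP => i j; rewrite !mxE /= w1 divr1 opprK.
by case: (ord4_cases i) => [->|[->|[->|->]]]; case: (ord4_cases j) => [->|[->|[->|->]]].
Qed.

Lemma Om0_unit : Om0 \in unitmx.
Proof.
have -> : Om0 \in unitmx = ((r1 * r2) ^+ 2 \is a GRing.unit).
  by rewrite unitmxE /Om0 det4 /= ?toring; congr (_ \is a _); ring.
by rewrite unitfE sqrf_eq0 mulf_neq0.
Qed.

Lemma Om0_AL0 : Om0 *m AL0 = hessL_origin r1 r2.
Proof. by rewrite /Om0 /AL0 /hessL_origin mulM4; M4_entrywise; ring. Qed.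

Lemma Om0_AH0 : Om0 *m AH0 = hessH_origin.
Proof.
rewrite /AH0 -scalemxAr /Om0 /PH0 /hessH_origin mulM4 scaleM4.
by M4_entrywise; field; rewrite ?r1n0 ?r2n0.
Qed.

Lemma sp_AL0 : in_sp Om0 AL0.
Proof. by rewrite /in_sp /Om0 /AL0 !M4E zeroM4; M4_entrywise; ring. Qed.

Lemma sp_AH0 : in_sp Om0 AH0.
Proof.
rewrite /in_sp /Om0 /AH0 /PH0 !M4E zeroM4.
by M4_entrywise; field; rewrite r1n0 r2n0.
Qed.

Lemma lie_AL0_AH0 : lie AL0 AH0 = 0.
Proof.
rewrite /lie /AL0 /AH0 /PH0 !M4E zeroM4.
by M4_entrywise; field; rewrite r1n0 r2n0.
Qed.

Lemma trace_gram_pole : trace_gram AL0 AH0 = - 4 / (r1 * r2).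
Proof.
rewrite /trace_gram /AL0 /AH0 /PH0 !M4E !mxtraceM4 /= ?toring.
by field; rewrite r1n0 r2n0.
Qed.

Lemma centralizer_pole_entries (e : nat -> nat -> R) :
  in_sp Om0 (M4 e) -> lie (M4 e) AL0 = 0 -> lie (M4 e) PH0 = 0 ->
  M4 e = e 1 0 *: AL0 + (- e 1 2 / r2) *: PH0.
Proof.
rewrite /in_sp /lie /Om0 /AL0 /PH0 !M4E zeroM4 => /M4_eqP sp /M4_eqP cL /M4_eqP cP.
have r1K x : r1 * x = 0 -> x = 0 by move/eqP; rewrite mulf_eq0 (negbTE r1n0) => /eqP.
have r2K x : r2 * x = 0 -> x = 0 by move/eqP; rewrite mulf_eq0 (negbTE r2n0) => /eqP.
move: (cL 0 0 isT isT) (cL 0 1 isT isT) (cL 0 2 isT isT) (cL 0 3 isT isT)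
      (cL 2 0 isT isT) (cL 2 1 isT isT) (cL 2 2 isT isT) (cL 2 3 isT isT)
      (cP 0 0 isT isT) (cP 0 1 isT isT) (cP 0 2 isT isT) (cP 0 3 isT isT)
      (sp 0 1 isT isT) (sp 0 3 isT isT).
rewrite /= ?toring => cL00 cL01 cL02 cL03 cL20 cL21 cL22 cL23 cP00 cP01 cP02 cP03 sp01 sp03.
have e01 : e 0 1 = - e 1 0 by lra.
have e11 : e 1 1 = e 0 0 by lra.
have e03 : e 0 3 = - e 1 2 by lra.
have e13 : e 1 3 = e 0 2 by lra.
have e21 : e 2 1 = - e 3 0 by lra.
have e31 : e 3 1 = e 2 0 by lra.
have e23 : e 2 3 = - e 3 2 by lra.
have e33 : e 3 3 = e 2 2 by lra.
have e00 : e 0 0 = 0 by apply: r1K; rewrite e11 in sp01; lra.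
have e02 : e 0 2 = 0 by apply: r1K; rewrite e13 in sp03; rewrite e31 in cP01; lra.
have e20 : e 2 0 = 0 by apply: r2K; rewrite e13 e02 in sp03; lra.
have e22 : e 2 2 = 0 by apply: r2K; rewrite -e33; rewrite e00 in cP03; lra.
have e32 : e 3 2 = e 1 0.
  by apply/eqP; rewrite -subr_eq0; apply/eqP/r2K; rewrite e01 in cP02; lra.
have e30 : e 3 0 = - (r1 / r2) * e 1 2.
  apply: (mulfI r2n0); transitivity (- r1 * e 1 2); last by field.
  by rewrite e03 in cP00; lra.
M4_entrywise;
  rewrite ?e11 ?e13 ?e21 ?e31 ?e23 ?e33 ?e00 ?e01 ?e02 ?e03 ?e20 ?e22 ?e30 ?e32;
  by field.
Qed.

Lemma cartan_pole : cartan_span Om0 AL0 AH0.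
Proof.
have k_n0 : 2 * r1 * r2 != 0 by rewrite !mulf_eq0 pnatr_eq0 (negbTE r1n0) (negbTE r2n0).
apply: cartan_of_commuting.
- exact: sp_AL0.
- exact: sp_AH0.
- exact: lie_AL0_AH0.
- rewrite trace_gram_pole mulNr oppr_eq0 !mulf_eq0 invr_eq0 mulf_eq0 pnatr_eq0.
  by rewrite (negbTE r1n0) (negbTE r2n0).
rewrite [AH0]/AH0 => X spX XL; rewrite lie_scaler => /eqP.
rewrite scaler_eq0 invr_eq0 (negbTE k_n0) /= => /eqP XP.
rewrite [X]M4_eta centralizer_pole_entries -?M4_eta //.
exists (X (inord 1) (inord 0)), (- X (inord 1) (inord 2) / r2 * (2 * r1 * r2)).
by rewrite scalerA mulfK.
Qed.

Definition FF0 : 'M[R]_4 := M4 (fun i j => match i, j with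
  | 0%N, 1%N => -1 | 0%N, 3%N => 1 | 1%N, 0%N => 1 | 1%N, 2%N => -1
  | 2%N, 1%N => - (r1 / r2) | 2%N, 3%N => -1 | 3%N, 0%N => r1 / r2 | 3%N, 2%N => 1
  | _, _ => 0 end).

Lemma FF0_eq : 1 *: AL0 + (2 * r1) *: AH0 = FF0.
Proof.
rewrite /AL0 /AH0 /PH0 /FF0 scalerA !M4E.
by M4_entrywise; field; rewrite r1n0 r2n0.
Qed.

Lemma char_poly_FF0 (a : R) : a ^+ 2 = r1 / r2 ->
  char_poly FF0 = (('X - a%:P) ^+ 2 + (1 ^+ 2)%:P) * (('X + a%:P) ^+ 2 + (1 ^+ 2)%:P).
Proof.
move=> Ha; rewrite /char_poly /FF0 char_poly_mxM4 det4 /= ?toring.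
rewrite ?polyCN ?polyC0 ?expr1n ?polyC1 ?mulr1n ?mulr0n.
have -> : (r1 / r2)%:P = a%:P ^+ 2 by rewrite -Ha !expr2 polyCM.
ring.
Qed.

End Pole.

Lemma sgnz_pm (z : R) : sgnz z = 1 \/ sgnz z = -1.
Proof. by rewrite /sgnz; case: ifP => _; [left | right]. Qed.

Lemma grad_hem_origin (r1 r2 s : R) : s = 1 \/ s = -1 ->
  grad (L_hem r1 r2 s) origin = 0 /\ grad (H_hem s) origin = 0.
Proof.
move=> Hs; have Hw : Rlt 0 (1 - 0 ^ 2 - 0 ^ 2) by apply/RltP; rewrite !toring expr0n /= !subr0.
split; apply/matrixP => i j; rewrite !mxE /origin ?pd_H_hem ?pd_L_hem //.
- rewrite /dL_hem; case: (ord4_cases j) => [->|[->|[->|->]]]; rewrite !mkqE !toring; ring.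
- rewrite /dH_hem; case: (ord4_cases j) => [->|[->|[->|->]]]; rewrite !mkqE !toring; ring.
Qed.

Lemma not_cylinder_pole (z : R) : z = 1 \/ z = -1 -> ~~ (-1 < z < 1).
Proof. by case=> ->; rewrite ?ltxx ?andbF. Qed.

Lemma fixed_pt_pole (r1 r2 z : R) : z = 1 \/ z = -1 -> fixed_pt r1 r2 0 0 z 0 0.
Proof.
move=> Hz; split=> [_ | th Hcyl]; first exact: grad_hem_origin (sgnz_pm z).
by have := not_cylinder_pole Hz; rewrite Hcyl.
Qed.

Lemma rank0_pole (r1 r2 z : R) : z = 1 \/ z = -1 -> b_rank_dF r1 r2 0 0 z 0 0 0.
Proof.
move=> Hz; split=> [_ | th Hcyl]; last by have := not_cylinder_pole Hz; rewrite Hcyl.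
have [GL GH] := grad_hem_origin r1 r2 (sgnz_pm z).
by rewrite /dF_hem; change (mkq 0 0 0 0) with origin; rewrite GL GH col_mx0 mxrank0.
Qed.

Lemma focus_focus_pole (r1 r2 z : R) : 0 < r1 -> 0 < r2 -> z = 1 \/ z = -1 ->
  nondeg_focus_focus r1 r2 0 0 z 0 0.
Proof.
move=> Hr1 Hr2 Hz; split; first by case: Hz => ->; rewrite ?oppr_eq0 oner_eq0.
rewrite /= -/origin Omega_origin hess_L_hem ?hess_H_hem; last exact: sgnz_pm.
rewrite (invmx_solve (Om0_unit Hr1 Hr2) (Om0_AL0 r1 r2)).
rewrite (invmx_solve (Om0_unit Hr1 Hr2) (Om0_AH0 Hr1 Hr2)).
split; first exact: cartan_pole.
have Hq : 0 < r1 / r2 by rewrite divr_gt0.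
exists 1, (2 * r1), (Num.sqrt (r1 / r2)), 1.
split; first by rewrite lt0r_neq0 // sqrtr_gt0.
split; first exact: oner_neq0.
by rewrite FF0_eq //; apply: char_poly_FF0; rewrite sqr_sqrtr // ltW.
Qed.

Lemma rank2_off_poles (r1 r2 x y z u v : R) : 0 < r1 -> 0 < r2 -> onM x y z u v ->
  (x, y, z, u, v) <> (0, 0, 1, 0, 0) -> (x, y, z, u, v) <> (0, 0, -1, 0, 0) ->
  b_rank_dF r1 r2 x y z u v 2.
Proof.
move=> Hr1 Hr2 HM hN hS; split=> [Hz | th Hcyl _ _]; last exact: rank_dF_cyl.
apply: rank_dF_hem => //; first exact: sgnz_pm.
  have : 0 < z ^+ 2 by rewrite lt0r sqr_ge0 sqrf_eq0 Hz.
  by move: HM; rewrite /onM; lra.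
move=> [hx [hy [hu hv]]]; move: HM; rewrite /onM hx hy expr0n !add0r => /eqP.
by rewrite sqrf_eq1 => /orP[] /eqP hz; [apply: hN | apply: hS]; rewrite hx hy hu hv hz.
Qed.

(* The rank of dF at a point of M does not depend on the chart: some
   standard chart always contains the point. *)
Lemma b_rank_dF_unique (r1 r2 x y z u v : R) (r r' : nat) : onM x y z u v ->
  b_rank_dF r1 r2 x y z u v r -> b_rank_dF r1 r2 x y z u v r' -> r = r'.
Proof.
move=> HM [Hh Hc] [Hh' Hc'].
have [Hz|Hz] := eqVneq z 0; last by rewrite -(Hh Hz) (Hh' Hz).
have [th [hx hy]] : exists th, x = cos th /\ y = sin th.
  by apply: angle_of_unit_circle; move: HM; rewrite /onM Hz expr0n addr0 !toring.
have Hcyl : -1 < z < 1 by rewrite Hz ltrN10 ltr01.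
have E1 : R_sqrt.sqrt (1 - z ^+ 2) = 1 by rewrite Hz expr0n RminusE subr0 sqrt_1.
have Ex : x = R_sqrt.sqrt (1 - z ^+ 2) * cos th by rewrite E1 mul1r.
have Ey : y = R_sqrt.sqrt (1 - z ^+ 2) * sin th by rewrite E1 mul1r.
by rewrite -(Hc th Hcyl Ex Ey) (Hc' th Hcyl Ex Ey).
Qed.

Theorem proposition4p4 (rho1 rho2 : R) : 0 < rho1 -> 0 < rho2 ->
  (forall x y z u v : R, onM x y z u v ->
     (singular_pt rho1 rho2 x y z u v <->
        ((x, y, z, u, v) = (0, 0, 1, 0, 0) \/ (x, y, z, u, v) = (0, 0, -1, 0, 0))) /\
     ((x, y, z, u, v) <> (0, 0, 1, 0, 0) -> (x, y, z, u, v) <> (0, 0, -1, 0, 0) ->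
        b_rank_dF rho1 rho2 x y z u v 2)) /\
  fixed_pt rho1 rho2 0 0 1 0 0 /\ fixed_pt rho1 rho2 0 0 (-1) 0 0 /\
  nondeg_focus_focus rho1 rho2 0 0 1 0 0 /\ nondeg_focus_focus rho1 rho2 0 0 (-1) 0 0.
Proof.
move=> Hr1 Hr2.
have N : (1 : R) = 1 \/ (1 : R) = -1 by left.
have S : (-1 : R) = 1 \/ (-1 : R) = -1 by right.
split; last exact: (conj (fixed_pt_pole rho1 rho2 N) (conj (fixed_pt_pole rho1 rho2 S)
  (conj (focus_focus_pole Hr1 Hr2 N) (focus_focus_pole Hr1 Hr2 S)))).
move=> x y z u v HM; split; last exact: rank2_off_poles.
split=> [[r [Hr Hrank]] | Hpole]; last first.
  by exists 0%N; split=> //; case: Hpole => -[-> -> -> -> ->]; apply: rank0_pole.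
have [->|hN] := eqVneq (x, y, z, u, v) (0, 0, 1, 0, 0); first by left.
have [->|hS] := eqVneq (x, y, z, u, v) (0, 0, -1, 0, 0); first by right.
have R2 := rank2_off_poles Hr1 Hr2 HM (elimN eqP hN) (elimN eqP hS).
by rewrite (b_rank_dF_unique HM Hrank R2) in Hr.
Qed.
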